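(* Let $(E\to M,\rho,\langle\cdot,\cdot\rangle,\circ)$ be a Courant algebroid and $(\mathbf I,\mathbf J,\mathbf K)$ an almost hypercomplex structure on $E$ with $N_{\mathbf I,\mathbf J}=0$. Then the hypercomplex connection $$\nabla_XY=-\tfrac12\mathbf K\big(\mathbf JY\circ\mathbf IX-\mathbf J(Y\circ\mathbf IX)-\mathbf I(\mathbf JY\circ X)+\mathbf J\mathbf I(Y\circ X)\big)$$ satisfies $\nabla\mathbf I=\nabla\mathbf J=\nabla\mathbf K=0$ and, for all $X,Y\in\Gamma(E)$, $$T(X,Y)=\mathbf ID\langle X,\mathbf IY\rangle+\mathbf JD\langle X,\mathbf JY\rangle+\mathbf KD\langle X,\mathbf KY\rangle.$$
   Context: A Courant algebroid $(E\to M,\rho,\langle\cdot,\cdot\rangle,\circ)$ consists of a real vector bundle $E\to M$ over a smooth manifold, a nondegenerate symmetric fiberwise bilinear pairing $\langle\cdot,\cdot\rangle$ on $E$, a vector bundle map $\rho:E\to TM$ (the anchor), and an $\mathbb R$-bilinear operation $\circ$ on $\Gamma(E)$ (the Dorfman bracket) such that for all $f\in C^\infty(M)$, $x,y,z\in\Gamma(E)$: $x\circ(y\circ z)=(x\circ y)\circ z+y\circ(x\circ z)$; $\rho(x\circ y)=[\rho(x),\rho(y)]$; $x\circ(fy)=(\rho(x)f)y+f(x\circ y)$; $x\circ y+y\circ x=2D\langle x,y\rangle$; $(Df)\circ x=0$; $\rho(x)\langle y,z\rangle=\langle x\circ y,z\rangle+\langle y,x\circ z\rangle$. Here $D:C^\infty(M)\to\Gamma(E)$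 is the $\mathbb R$-linear map defined by $\langle Df,x\rangle=\tfrac12\rho(x)f$. The Courant bracket is $[\![x,y]\!]=\tfrac12(x\circ y-y\circ x)$. For vector bundle endomorphisms $F,G$ of $E$ (over $\mathrm{id}_M$), the Nijenhuis concomitant is the tensor $N_{F,G}:E\otimes E\to E$ given by $N_{F,G}(X,Y)=FX\circ GY-F(X\circ GY)-G(FX\circ Y)+FG(X\circ Y)+GX\circ FY-G(X\circ FY)-F(GX\circ Y)+GF(X\circ Y)$. An almost hypercomplex structure on $E$ is a triple $(\mathbf I,\mathbf J,\mathbf K)$ of vector bundle endomorphisms of $E$ over $\mathrm{id}_M$, each orthogonal for $\langle\cdot,\cdot\rangle$, with $\mathbf I^2=\mathbf J^2=\mathbf K^2=\mathbf I\mathbf J\mathbf K=-1$. Given an almost hypercomplex structure, for $f\in C^\infty(M)$ and $X,Y\in\Gamma(E)$ set $\Delta_f(X,Y)=\langle X,Y\rangle Df+\langle\mathbf IX,Y\rangle\mathbf I Df+\langle\mathbf JX,Y\rangle\mathbf JDf+\langle\mathbf KX,Y\rangle\mathbf KDf$. A hypercomplex connection is an $\mathbb R$-bilinear map $\Gamma(E)\times\Gamma(E)\to\Gamma(E)$, $(X,Y)\mapsto\nabla_XY$, with $\nabla_{fX}Y=f\nabla_XY$ and $\nabla_X(fY)=(\rho(X)f)Y+f\nabla_XY-\Delta_f(X,Y)$. Its torsion is $T(X,Y)=\nabla_XY-\nabla_YX-[\![X,Y]\!]$. For an endomorphism $P$ of $E$, $(\nabla_XP)Y:=\nabla_X(PY)-P(\nabla_XY)$,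 and $\nabla P=0$ means this vanishes for all $X,Y$. *)

(* Algebraic (Lie--Rinehart style) model of a Courant algebroid:
   R      : the real scalars (a real field),
   A      : the commutative R-algebra C^oo(M),
   V      : the A-module Gamma(E) of sections. *)
From HB Require Import structures.
From mathcomp Require Import all_boot all_order all_algebra.
Set Implicit Arguments. Unset Strict Implicit. Unset Printing Implicit Defensive.
Import Order.TTheory GRing.Theory Num.Theory.
Local Open Scope ring_scope.

Definition vector_field (R : realFieldType) (A : comAlgType R) (v : A -> A) : Prop :=
  [/\ (forall f g : A, v (f + g) = v f + v g),
      (forall (k : R) (f : A), v (k *: f) = k *: v f) &
      (forall f g : A, v (f * g) = v f * g + f * v g)].

Definition rscale (R : realFieldType) (A : comAlgType R) (V : lmodType A)
  (k : R) (v : V) : V := ((k%:A : A) *: v).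

Record courant_algebroid (R : realFieldType) (A : comAlgType R) (V : lmodType A)
  (pair : V -> V -> A) (rho : V -> A -> A) (dorf : V -> V -> V) (D : A -> V) : Prop :=
{ pair_sym : forall x y, pair x y = pair y x;
  pair_addl : forall x y z, pair (x + y) z = pair x z + pair y z;
  pair_scalel : forall (f : A) x y, pair (f *: x) y = f * pair x y;
  pair_nondeg : forall x, (forall y, pair x y = 0) -> x = 0;
  anchor_add : forall x y f, rho (x + y) f = rho x f + rho y f;
  anchor_scale : forall (g : A) x f, rho (g *: x) f = g * rho x f;
  anchor_vf : forall x, vector_field (rho x);
  dorf_addl : forall x y z, dorf (x + y) z = dorf x z + dorf y z;
  dorf_addr : forall x y z, dorf x (y + z) = dorf x y + dorf x z;
  dorf_scalel : forall (k : R) x y, dorf (rscale k x) y = rscale k (dorf x y);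
  dorf_scaler : forall (k : R) x y, dorf x (rscale k y) = rscale k (dorf x y);
  dorf_jacobi : forall x y z,
      dorf x (dorf y z) = dorf (dorf x y) z + dorf y (dorf x z);
  dorf_anchor : forall x y f,
      rho (dorf x y) f = rho x (rho y f) - rho y (rho x f);
  dorf_leibniz : forall x y (f : A), dorf x (f *: y) = rho x f *: y + f *: dorf x y;
  dorf_sym : forall x y, dorf x y + dorf y x = (2%:R : A) *: D (pair x y);
  dorf_D : forall f x, dorf (D f) x = 0;
  dorf_invariant : forall x y z,
      rho x (pair y z) = pair (dorf x y) z + pair y (dorf x z);
  D_def : forall f x, pair (D f) x = (2^-1 : R) *: rho x f }.

(* vector bundle endomorphism over id_M = A-linear map of sections *)
Definition bundle_endo (A : pzRingType) (V : lmodType A) (P : V -> V) : Prop :=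
  (forall x y, P (x + y) = P x + P y) /\ (forall (f : A) x, P (f *: x) = f *: P x).

Definition orthogonal_endo (A : pzRingType) (V : lmodType A)
  (pair : V -> V -> A) (P : V -> V) : Prop :=
  forall x y, pair (P x) (P y) = pair x y.

Record almost_hypercomplex (A : pzRingType) (V : lmodType A)
  (pair : V -> V -> A) (I J K : V -> V) : Prop :=
{ ahc_endoI : bundle_endo I; ahc_endoJ : bundle_endo J; ahc_endoK : bundle_endo K;
  ahc_orthI : orthogonal_endo pair I; ahc_orthJ : orthogonal_endo pair J;
  ahc_orthK : orthogonal_endo pair K;
  ahc_I2 : forall x, I (I x) = - x;
  ahc_J2 : forall x, J (J x) = - x;
  ahc_K2 : forall x, K (K x) = - x;
  ahc_IJK : forall x, I (J (K x)) = - x }.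

Definition nijenhuis (A : pzRingType) (V : lmodType A) (dorf : V -> V -> V)
  (F G : V -> V) (X Y : V) : V :=
  dorf (F X) (G Y) - F (dorf X (G Y)) - G (dorf (F X) Y) + F (G (dorf X Y))
  + dorf (G X) (F Y) - G (dorf X (F Y)) - F (dorf (G X) Y) + G (F (dorf X Y)).

Definition hc_Delta (A : pzRingType) (V : lmodType A) (pair : V -> V -> A)
  (D : A -> V) (I J K : V -> V) (f : A) (X Y : V) : V :=
  pair X Y *: D f + pair (I X) Y *: I (D f) + pair (J X) Y *: J (D f)
  + pair (K X) Y *: K (D f).

Definition hypercomplex_connection (A : pzRingType) (V : lmodType A)
  (pair : V -> V -> A) (rho : V -> A -> A) (D : A -> V) (I J K : V -> V)
  (nabla : V -> V -> V) : Prop :=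
  [/\ (forall X X' Y, nabla (X + X') Y = nabla X Y + nabla X' Y),
      (forall X Y Y', nabla X (Y + Y') = nabla X Y + nabla X Y'),
      (forall (f : A) X Y, nabla (f *: X) Y = f *: nabla X Y) &
      (forall (f : A) X Y,
          nabla X (f *: Y) = rho X f *: Y + f *: nabla X Y - hc_Delta pair D I J K f X Y)].

Definition courant_bracket (R : realFieldType) (A : comAlgType R) (V : lmodType A)
  (dorf : V -> V -> V) (x y : V) : V :=
  rscale (2^-1 : R) (dorf x y - dorf y x).

Definition torsion (R : realFieldType) (A : comAlgType R) (V : lmodType A)
  (dorf : V -> V -> V) (nabla : V -> V -> V) (X Y : V) : V :=
  nabla X Y - nabla Y X - courant_bracket dorf X Y.

Definition cov_deriv (A : pzRingType) (V : lmodType A)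
  (nabla : V -> V -> V) (P : V -> V) (X Y : V) : V :=
  nabla X (P Y) - P (nabla X Y).

Definition nablaIJ (R : realFieldType) (A : comAlgType R) (V : lmodType A)
  (dorf : V -> V -> V) (I J K : V -> V) (X Y : V) : V :=
  rscale (- (2^-1 : R))
    (K (dorf (J Y) (I X) - J (dorf Y (I X)) - I (dorf (J Y) X) + J (I (dorf Y X)))).

From HB Require Import structures.
From mathcomp Require Import all_boot all_order all_algebra.
Set Implicit Arguments. Unset Strict Implicit. Unset Printing Implicit Defensive.
Import Order.TTheory GRing.Theory Num.Theory.
Local Open Scope ring_scope.

(* Everything reduces to identities in the abelian group of sections once the
   Dorfman bracket, I, J, K and the pairing have been pushed through sums,
   opposites and function multiples. *)

Inductive zexpr := ZAtom of nat | ZAdd of zexpr & zexpr | ZOpp of zexpr | ZZero.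

Fixpoint zeval (V : zmodType) (env : seq V) (e : zexpr) : V :=
  match e with
  | ZAtom i => nth 0 env i
  | ZAdd a b => zeval env a + zeval env b
  | ZOpp a => - zeval env a
  | ZZero => 0
  end.

Fixpoint zcoef (e : zexpr) (i : nat) : int :=
  match e with
  | ZAtom j => if i == j then 1 else 0
  | ZAdd a b => zcoef a i + zcoef b i
  | ZOpp a => - zcoef a i
  | ZZero => 0
  end.

Lemma zeval_coef (V : zmodType) (env : seq V) (e : zexpr) :
  zeval env e = \sum_(i < size env) (nth 0 env i) *~ zcoef e i.
Proof.
elim: e => [j|a IHa b IHb|a IHa|] /=.
- case: (ltnP j (size env)) => hj.
  + rewrite (bigD1 (Ordinal hj)) //= eqxx mulr1z big1 ?addr0 //.
    move=> i /negbTE; rewrite -val_eqE /= => ->; exact: mulr0z.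
  + rewrite nth_default // big1 // => i _; case: eqP => [eij|]; last by rewrite mulr0z.
    by move: (ltn_ord i); rewrite eij ltnNge hj.
- by rewrite IHa IHb -big_split /=; apply: eq_bigr => i _; rewrite mulrzDr.
- by rewrite IHa -sumrN; apply: eq_bigr => i _; rewrite mulrNz.
- by rewrite big1 // => i _; rewrite mulr0z.
Qed.

Lemma zeval_eq (V : zmodType) (env : seq V) (e1 e2 : zexpr) :
  all (fun i => zcoef e1 i == zcoef e2 i) (iota 0 (size env)) ->
  zeval env e1 = zeval env e2.
Proof.
move/allP=> H; rewrite !zeval_coef; apply: eq_bigr => i _.
by rewrite (eqP (H i _)) // mem_iota /=.
Qed.

Ltac zfind t env k :=
  lazymatch env with
  | ?u :: ?r => match constr:(tt) with
                | _ => let _ := match constr:(tt) with _ => unify t u end in constr:(k)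
                | _ => zfind t r (S k)
                end
  end.

(* Reify t as a zexpr, extending the atom list env; returns (term, env'). *)
Ltac zreify t env :=
  lazymatch t with
  | ?a + ?b =>
      let p := zreify a env in
      lazymatch p with (?ea, ?env1) =>
        let q := zreify b env1 in
        lazymatch q with (?eb, ?env2) => constr:((ZAdd ea eb, env2)) end end
  | - ?a =>
      let p := zreify a env in
      lazymatch p with (?ea, ?env1) => constr:((ZOpp ea, env1)) end
  | 0 => constr:((ZZero, env))
  | _ =>
      let r := match constr:(tt) with
               | _ => let k := zfind t env 0%N in constr:((ZAtom k, env))
               | _ => let n := eval compute in (size env) in
                      let env' := eval cbv beta iota delta [cat] in (env ++ [:: t]) in
                      constr:((ZAtom n, env'))
               end in r
  end.

(* Prove an equality in a zmodType that holds in every abelian group. *)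
Ltac zmod_eq :=
  lazymatch goal with
  |- @eq ?T ?l ?r =>
    let p := zreify l (@nil T) in
    lazymatch p with (?el, ?env1) =>
      let q := zreify r env1 in
      lazymatch q with (?er, ?env2) =>
        change (zeval env2 el = zeval env2 er);
        apply: zeval_eq; vm_compute; reflexivity
      end end
  end.

Section BundleEndo.
Variables (A : pzRingType) (V : lmodType A) (P : V -> V).
Hypothesis HP : bundle_endo P.

Lemma endoD (x y : V) : P (x + y) = P x + P y.
Proof. by case: HP. Qed.

Lemma endoZ (f : A) (x : V) : P (f *: x) = f *: P x.
Proof. by case: HP. Qed.

Lemma endoN (x : V) : P (- x) = - P x.
Proof. by rewrite -scaleN1r endoZ scaleN1r. Qed.

End BundleEndo.

Section RealScale.
Variables (R : realFieldType) (A : comAlgType R) (V : lmodType A).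

Lemma rscaleD (k : R) (u v : V) : rscale k (u + v) = rscale k u + rscale k v.
Proof. by rewrite /rscale scalerDr. Qed.

Lemma rscaleN (k : R) (u : V) : rscale k (- u) = - rscale k u.
Proof. by rewrite /rscale scalerN. Qed.

Lemma rscaleN1 (u : V) : rscale (-1) u = - u.
Proof. by rewrite /rscale !scaleN1r. Qed.

Lemma rscaleZ (k : R) (f : A) (u : V) : rscale k (f *: u) = f *: rscale k u.
Proof. by rewrite /rscale !scalerA mulrC. Qed.

Lemma rscale_endo (P : V -> V) (k : R) (x : V) :
  bundle_endo P -> P (rscale k x) = rscale k (P x).
Proof. by move=> HP; rewrite /rscale (endoZ HP). Qed.

Lemma rscale_half_double (u : V) : rscale (2^-1) (u + u) = u.
Proof.
have half_twice : (2^-1 : R) *+ 2 = 1.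
  by rewrite -(mulr_natr (2^-1 : R) 2) mulVf // pnatr_eq0.
by rewrite /rscale -mulr2n -scalerMnr scalerMnl scalerMnl half_twice !scale1r.
Qed.

Lemma rscale_mhalf_double (u : V) : rscale (- 2^-1) (u + u) = - u.
Proof. by have := rscale_half_double u; rewrite /rscale !scaleNr => ->. Qed.

Lemma scale2_double (v : V) : (2%:R : A) *: v = v + v.
Proof. by rewrite scaler_nat mulr2n. Qed.

End RealScale.

Section Quaternions.
Variables (A : pzRingType) (V : lmodType A) (pair : V -> V -> A) (I J K : V -> V).
Hypothesis Hhc : almost_hypercomplex pair I J K.

Let HI := ahc_endoI Hhc.
Let HJ := ahc_endoJ Hhc.

Lemma IJ_K (x : V) : I (J x) = K x.
Proof.
have := ahc_IJK Hhc (K x).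
by rewrite (ahc_K2 Hhc) (endoN HJ) (endoN HI) => /oppr_inj.
Qed.

Lemma JK_I (x : V) : J (K x) = I x.
Proof.
have := congr1 I (ahc_IJK Hhc x).
by rewrite (ahc_I2 Hhc) (endoN HI) => /oppr_inj.
Qed.

Lemma JI_K (x : V) : J (I x) = - K x.
Proof. by rewrite -JK_I (ahc_J2 Hhc). Qed.

Lemma KJ_I (x : V) : K (J x) = - I x.
Proof. by rewrite -IJ_K (ahc_J2 Hhc) (endoN HI). Qed.

Lemma IK_J (x : V) : I (K x) = - J x.
Proof. by rewrite -IJ_K (ahc_I2 Hhc). Qed.

Lemma KI_J (x : V) : K (I x) = J x.
Proof. by rewrite -IJ_K JI_K (endoN HI) IK_J opprK. Qed.

End Quaternions.

Section CourantBasics.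
Variables (R : realFieldType) (A : comAlgType R) (V : lmodType A)
  (pair : V -> V -> A) (rho : V -> A -> A) (dorf : V -> V -> V) (D : A -> V).
Hypothesis HC : courant_algebroid pair rho dorf D.

Lemma pairNl (x y : V) : pair (- x) y = - pair x y.
Proof. by rewrite -scaleN1r (pair_scalel HC) mulN1r. Qed.

Lemma pairNr (x y : V) : pair x (- y) = - pair x y.
Proof. by rewrite (pair_sym HC) pairNl (pair_sym HC). Qed.

Lemma pair_ext (x x' : V) : (forall y, pair x y = pair x' y) -> x = x'.
Proof.
move=> H; apply/eqP; rewrite -subr_eq0; apply/eqP; apply: (pair_nondeg HC) => y.
by rewrite (pair_addl HC) pairNl H subrr.
Qed.

Lemma orth_skew (P : V -> V) : orthogonal_endo pair P ->
  (forall x, P (P x) = - x) -> forall x y, pair (P x) y = - pair x (P y).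
Proof. by move=> HP P2 x y; rewrite -HP P2 pairNl. Qed.

Lemma rhoN (x : V) (g : A) : rho x (- g) = - rho x g.
Proof. by have [_ hs _] := anchor_vf HC x; rewrite -(scaleN1r g) hs scaleN1r. Qed.

Lemma DN (g : A) : D (- g) = - D g.
Proof. by apply: pair_ext => y; rewrite pairNl !(D_def HC) rhoN scalerN. Qed.

Lemma DM (f g : A) : D (f * g) = f *: D g + g *: D f.
Proof.
apply: pair_ext => y; have [_ _ rhoM] := anchor_vf HC y.
rewrite (pair_addl HC) !(pair_scalel HC) !(D_def HC) rhoM scalerDr.
by rewrite -!scalerAr addrC (mulrC g).
Qed.

Lemma dorfNl (x y : V) : dorf (- x) y = - dorf x y.
Proof. by rewrite -rscaleN1 (dorf_scalel HC) rscaleN1. Qed.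

Lemma dorfNr (x y : V) : dorf x (- y) = - dorf x y.
Proof. by rewrite -rscaleN1 (dorf_scaler HC) rscaleN1. Qed.

Lemma dorf_swap (x y : V) : dorf x y = D (pair x y) + D (pair x y) - dorf y x.
Proof. by rewrite -scale2_double -(dorf_sym HC) addrK. Qed.

Lemma dorf_scalel_fun (f : A) (a b : V) :
  dorf (f *: a) b = f *: dorf a b - rho b f *: a + (pair a b *: D f + pair a b *: D f).
Proof.
rewrite dorf_swap (dorf_leibniz HC) (pair_scalel HC) DM (dorf_swap b a) (pair_sym HC b a).
by rewrite scalerBr scalerDr; zmod_eq.
Qed.

End CourantBasics.

Section Connection.
Variables (R : realFieldType) (A : comAlgType R) (V : lmodType A)
  (pair : V -> V -> A) (rho : V -> A -> A) (dorf : V -> V -> V) (D : A -> V)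
  (I J K : V -> V).
Hypothesis HC : courant_algebroid pair rho dorf D.
Hypothesis Hhc : almost_hypercomplex pair I J K.

Let HI := ahc_endoI Hhc.
Let HJ := ahc_endoJ Hhc.
Let HK := ahc_endoK Hhc.

Ltac expand := rewrite ?(endoD HI, endoD HJ, endoD HK, endoN HI, endoN HJ, endoN HK,
   endoZ HI, endoZ HJ, endoZ HK, dorf_addl HC, dorf_addr HC, dorfNl HC, dorfNr HC,
   dorf_leibniz HC, dorf_scalel_fun HC, scalerDr, scalerN, scaleNr, opprK).

Definition ij_core (X Y : V) : V :=
  dorf (J Y) (I X) - J (dorf Y (I X)) - I (dorf (J Y) X) + J (I (dorf Y X)).

Definition ji_core (X Y : V) : V :=
  dorf (I Y) (J X) - I (dorf Y (J X)) - J (dorf (I Y) X) + I (J (dorf Y X)).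

Definition halfK (v : V) : V := rscale (- 2^-1) (K v).

Lemma nablaE (X Y : V) : nablaIJ dorf I J K X Y = halfK (ij_core X Y).
Proof. by []. Qed.

Lemma halfKD (u v : V) : halfK (u + v) = halfK u + halfK v.
Proof. by rewrite /halfK (endoD HK) rscaleD. Qed.

Lemma halfKN (u : V) : halfK (- u) = - halfK u.
Proof. by rewrite /halfK (endoN HK) rscaleN. Qed.

Lemma halfKZ (f : A) (u : V) : halfK (f *: u) = f *: halfK u.
Proof. by rewrite /halfK (endoZ HK) rscaleZ. Qed.

Lemma halfK_double (u : V) : halfK (u + u) = - K u.
Proof. by rewrite /halfK (endoD HK) rscale_mhalf_double. Qed.

Lemma halfK_Jdouble (u : V) : halfK (J (u + u)) = I u.
Proof. by rewrite /halfK (KJ_I Hhc) rscaleN (endoD HI) rscale_mhalf_double opprK. Qed.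

Lemma halfK_Idouble (u : V) : halfK (I (u + u)) = - J u.
Proof. by rewrite /halfK (KI_J Hhc) (endoD HJ) rscale_mhalf_double. Qed.

Lemma halfK_Kdouble (u : V) : halfK (K (u + u)) = u.
Proof. by rewrite /halfK (ahc_K2 Hhc) rscaleN rscale_mhalf_double opprK. Qed.

Lemma pair_JY_IX (X Y : V) : pair (J Y) (I X) = pair (K X) Y.
Proof.
rewrite (orth_skew HC (ahc_orthJ Hhc) (ahc_J2 Hhc)) (JI_K Hhc) (pairNr HC) opprK.
exact: (pair_sym HC).
Qed.

Lemma pair_JY_X (X Y : V) : pair (J Y) X = - pair (J X) Y.
Proof. by rewrite (orth_skew HC (ahc_orthJ Hhc) (ahc_J2 Hhc)) (pair_sym HC). Qed.

Lemma ij_coreDl (X X' Y : V) : ij_core (X + X') Y = ij_core X Y + ij_core X' Y.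
Proof. by rewrite /ij_core; expand; zmod_eq. Qed.

Lemma ij_coreDr (X Y Y' : V) : ij_core X (Y + Y') = ij_core X Y + ij_core X Y'.
Proof. by rewrite /ij_core; expand; zmod_eq. Qed.

Lemma ij_coreZl (f : A) (X Y : V) : ij_core (f *: X) Y = f *: ij_core X Y.
Proof. by rewrite /ij_core; expand; zmod_eq. Qed.

(* Leibniz rule of ij_core in its second argument; the anomaly w, once hit
   by -1/2 K, becomes -Delta_f(X,Y). *)
Lemma ij_coreZr (f : A) (X Y : V) : ij_core X (f *: Y) = f *: ij_core X Y
  + (rho X f *: K Y + rho X f *: K Y)
  + (let w := pair (K X) Y *: D f - pair (I X) Y *: J (D f) + pair (J X) Y *: I (D f)
              - pair X Y *: K (D f) in w + w).
Proof.
rewrite /ij_core; expand.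
rewrite !(IJ_K Hhc) !(JI_K Hhc) pair_JY_IX (pair_sym HC Y (I X)) pair_JY_X (pair_sym HC Y X).
by expand; zmod_eq.
Qed.

Lemma nabla_hypercomplex : hypercomplex_connection pair rho D I J K (nablaIJ dorf I J K).
Proof.
split=> [X X' Y|X Y Y'|f X Y|f X Y]; rewrite !nablaE.
- by rewrite ij_coreDl halfKD.
- by rewrite ij_coreDr halfKD.
- by rewrite ij_coreZl halfKZ.
- rewrite ij_coreZr /= halfKD halfKD halfKZ !halfK_double /hc_Delta.
  by expand; rewrite ?(ahc_K2 Hhc) ?(KJ_I Hhc) ?(KI_J Hhc); expand; zmod_eq.
Qed.

Lemma nijenhuis_cores (X Y : V) : nijenhuis dorf I J Y X = ij_core X Y + ji_core X Y.
Proof. by rewrite /nijenhuis /ij_core /ji_core; zmod_eq. Qed.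

Lemma ij_core_J (X Y : V) : ij_core X (J Y) = - J (ij_core X Y).
Proof. by rewrite /ij_core; expand; rewrite ?(ahc_J2 Hhc); expand; zmod_eq. Qed.

Lemma ji_core_I (X Y : V) : ji_core X (I Y) = - I (ji_core X Y).
Proof. by rewrite /ji_core; expand; rewrite ?(ahc_I2 Hhc); expand; zmod_eq. Qed.

Lemma nabla_J (X Y : V) : nablaIJ dorf I J K X (J Y) = J (nablaIJ dorf I J K X Y).
Proof.
by rewrite !nablaE ij_core_J /halfK (endoN HK) (KJ_I Hhc) opprK (rscale_endo _ _ HJ) (JK_I Hhc).
Qed.

Hypothesis HN : forall X Y, nijenhuis dorf I J X Y = 0.

Lemma ij_core_ji (X Y : V) : ij_core X Y = - ji_core X Y.
Proof. by apply/eqP; rewrite -addr_eq0 -nijenhuis_cores HN. Qed.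

Lemma nabla_I (X Y : V) : nablaIJ dorf I J K X (I Y) = I (nablaIJ dorf I J K X Y).
Proof.
rewrite !nablaE !ij_core_ji ji_core_I opprK /halfK (endoN HK) (KI_J Hhc).
by rewrite (rscale_endo _ _ HI) (endoN HI) (IK_J Hhc) opprK.
Qed.

Lemma nabla_K (X Y : V) : nablaIJ dorf I J K X (K Y) = K (nablaIJ dorf I J K X Y).
Proof. by rewrite -(IJ_K Hhc) nabla_I nabla_J (IJ_K Hhc). Qed.

(* Antisymmetrisation of ij_core, from N_{I,J}(X,Y) = 0 and
   x o y + y o x = 2 D<x,y>. *)
Lemma ij_core_skew (X Y : V) : ij_core X Y - ij_core Y X =
  let d1 := D (pair (J Y) (I X)) in let d2 := D (pair Y (I X)) in
  let d3 := D (pair (J Y) X) in let d4 := D (pair Y X) in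
  (d1 + d1) - J (d2 + d2) - I (d3 + d3) - K (d4 + d4)
  + (K (dorf X Y) + K (dorf X Y)).
Proof.
have N0 := HN X Y; rewrite /nijenhuis in N0.
rewrite /= -[LHS]addr0 -N0 /ij_core (dorf_swap HC (J Y) (I X)) (dorf_swap HC Y (I X)).
rewrite (dorf_swap HC (J Y) X) (dorf_swap HC Y X).
by expand; rewrite ?(IJ_K Hhc) ?(JI_K Hhc); expand; zmod_eq.
Qed.

Lemma nabla_torsion (X Y : V) : torsion dorf (nablaIJ dorf I J K) X Y =
  I (D (pair X (I Y))) + J (D (pair X (J Y))) + K (D (pair X (K Y))).
Proof.
have half_bracket (z d : V) : rscale (2^-1) (z - (d + d - z)) = z - d.
  rewrite (_ : z - (d + d - z) = (z + z) - (d + d)); last by zmod_eq.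
  by rewrite rscaleD rscaleN !rscale_half_double.
rewrite /torsion !nablaE /courant_bracket (dorf_swap HC Y X) half_bracket.
rewrite -halfKN -halfKD ij_core_skew /= halfKD halfKD halfKD halfKD !halfKN !halfK_double.
rewrite halfK_Jdouble halfK_Idouble halfK_Kdouble (ahc_K2 Hhc) opprK.
rewrite pair_JY_IX (pair_sym HC Y (I X)) (pair_sym HC (J Y) X) (pair_sym HC Y X).
rewrite (orth_skew HC (ahc_orthK Hhc) (ahc_K2 Hhc)).
rewrite (orth_skew HC (ahc_orthI Hhc) (ahc_I2 Hhc)).
by rewrite !(DN HC); expand; zmod_eq.
Qed.

End Connection.

Theorem mainTheorem5 (R : realFieldType) (A : comAlgType R) (V : lmodType A)
  (pair : V -> V -> A) (rho : V -> A -> A) (dorf : V -> V -> V) (D : A -> V)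
  (I J K : V -> V)
  (HC : courant_algebroid pair rho dorf D)
  (Hhc : almost_hypercomplex pair I J K)
  (HN : forall X Y, nijenhuis dorf I J X Y = 0) :
  let nabla := nablaIJ dorf I J K in
  [/\ hypercomplex_connection pair rho D I J K nabla,
      (forall X Y, cov_deriv nabla I X Y = 0),
      (forall X Y, cov_deriv nabla J X Y = 0),
      (forall X Y, cov_deriv nabla K X Y = 0) &
      (forall X Y, torsion dorf nabla X Y =
          I (D (pair X (I Y))) + J (D (pair X (J Y))) + K (D (pair X (K Y))))].
Proof.
move=> nabla; split.
- exact: nabla_hypercomplex HC Hhc.
- by move=> X Y; rewrite /cov_deriv /nabla (nabla_I HC Hhc HN) subrr.
- by move=> X Y; rewrite /cov_deriv /nabla (nabla_J HC Hhc) subrr.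
- by move=> X Y; rewrite /cov_deriv /nabla (nabla_K HC Hhc HN) subrr.
- by move=> X Y; rewrite /nabla (nabla_torsion HC Hhc HN).
Qed.
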